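(* There exists a tightly $\sigma$-filtered Boolean algebra of cardinality $\mathfrak{c}$ that has the countable separation property.
   Context: A Boolean algebra $\mathfrak{B}$ has the countable separation property if for every two countable sets $X,Y\subseteq\mathfrak{B}$ with $x\le y$ for all $x\in X$, $y\in Y$, there is $z\in\mathfrak{B}$ with $x\le z\le y$ for all $x\in X$, $y\in Y$. For a subset $X$ of a Boolean algebra, $\langle X\rangle$ is the subalgebra generated by $X$. Two subalgebras $A,S$ of a Boolean algebra commute if whenever $a\in A$, $s\in S$ and $a\wedge s=0$, there exist $b_1,b_2\in A\cap S$ with $a\le b_1$, $s\le b_2$, $b_1\wedge b_2=0$. A square of inclusions $R\subseteq A\subseteq B$, $R\subseteq S\subseteq B$ is a push-out diagram if $\langle A\cup S\rangle=B$, $A\cap S=R$, and $A$ and $S$ commute. A Boolean algebra $\mathfrak{B}$ is tightly $\sigma$-filtered if there is an increasing chain of subalgebras $(B_\alpha)_{\alpha<\xi}$ indexed by an ordinal $\xi$ with: $B_0=\{0,1\}$; $\mathfrak{B}=\bigcup_{\alpha<\xi}B_\alpha$; $B_\alpha=\bigcup_{\beta<\alpha}B_\beta$ for limit $\alpha$; and for every $\alpha<\xi$ there are countable subalgebras $R_\alpha,S_\alpha\subseteq\mathfrak{B}$ such that the inclusions $R_\alpha\subseteq B_\alpha\subseteq B_{\alpha+1}$, $R_\alpha\subseteq S_\alpha\subseteq B_{\alpha+1}$ form a push-out diagram. *)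

(* a Boolean algebra is a complemented distributive lattice
   with top and bottom, i.e. an Order.ctbDistrLatticeType. Subsets of the
   algebra are Prop-valued predicates. *)
From HB Require Import structures.
From mathcomp Require Import all_boot all_order.
Set Implicit Arguments. Unset Strict Implicit. Unset Printing Implicit Defensive.
Import Order.TTheory.
Local Open Scope order_scope.

Section BooleanAlgebraNotions.
Context {disp : Order.disp_t} {B : ctbDistrLatticeType disp}.

Definition bsubset (X Y : B -> Prop) : Prop := forall x, X x -> Y x.

Definition countable_set (X : B -> Prop) : Prop :=
  exists f : B -> nat, forall x y, X x -> X y -> f x = f y -> x = y.

Definition subalgebra (A : B -> Prop) : Prop :=
  [/\ A \bot, A \top,
      (forall x y, A x -> A y -> A (x `&` y)),
      (forall x y, A x -> A y -> A (x `|` y)) &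
      (forall x, A x -> A (~` x))].

Definition generated (X : B -> Prop) : B -> Prop :=
  fun b => forall A, subalgebra A -> bsubset X A -> A b.

Definition commute (A S : B -> Prop) : Prop :=
  forall a s, A a -> S s -> a `&` s = \bot ->
    exists b1 b2, [/\ A b1 /\ S b1, A b2 /\ S b2, a <= b1, s <= b2 &
                      b1 `&` b2 = \bot].

Definition pushout (R A S C : B -> Prop) : Prop :=
  [/\ bsubset R A /\ bsubset A C, bsubset R S /\ bsubset S C,
      (forall x, generated (fun y => A y \/ S y) x <-> C x),
      (forall x, (A x /\ S x) <-> R x) &
      commute A S].

Definition countable_separation : Prop :=
  forall X Y : B -> Prop, countable_set X -> countable_set Y ->
    (forall x y, X x -> Y y -> x <= y) ->
    exists z, (forall x, X x -> x <= z) /\ (forall y, Y y -> z <= y).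

(* The ordinal xi is represented by a well-ordered
   index type (I, lt); B_{alpha+1} is B_beta for the immediate successor beta
   of alpha, and the whole algebra when alpha is the largest index
   (convention B_xi = B). *)
Definition tightly_sigma_filtered : Prop :=
  exists (I : Type) (lt : I -> I -> Prop) (Bc : I -> B -> Prop),
    [/\
        (forall i, ~ lt i i) /\ (forall i j k, lt i j -> lt j k -> lt i k) /\
        (forall i j, lt i j \/ i = j \/ lt j i) /\ well_founded lt,
        (forall i, subalgebra (Bc i)) /\
        (forall i j, lt i j -> bsubset (Bc i) (Bc j)) /\
        (forall x, exists i, Bc i x),
        (forall i, (forall j, ~ lt j i) ->
           forall x, Bc i x <-> (x = \bot \/ x = \top)),
        (forall a, (exists b, lt b a) ->
           (forall b, lt b a -> exists c, lt b c /\ lt c a) ->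
           forall x, Bc a x <-> exists b, lt b a /\ Bc b x) &
        (forall a, exists R S : B -> Prop,
           [/\ subalgebra R /\ countable_set R,
               subalgebra S /\ countable_set S,
               (forall b, lt a b -> (forall c, ~ (lt a c /\ lt c b)) ->
                  pushout R (Bc a) S (Bc b)) &
               ((forall b, ~ lt a b) -> pushout R (Bc a) S (fun _ => True))])].

End BooleanAlgebraNotions.

Arguments countable_separation {disp} B.
Arguments tightly_sigma_filtered {disp} B.

From Pilot Require Import Defs.
From HB Require Import structures.
From mathcomp Require Import all_boot all_order.
From mathcomp Require Import boolp classical_sets cardinality wochoice filter.
From Stdlib Require Import Wellfounded.
Set Implicit Arguments. Unset Strict Implicit. Unset Printing Implicit Defensive.
Import Order.TTheory.
Local Open Scope classical_set_scope.
Local Open Scope card_scope.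

(* Take generators indexed by omega_1 x 2^omega, ordered lexicographically, and let
   the second coordinate of a generator g code two countable sequences X_g, Y_g of
   Boolean terms. The algebra is the algebra of terms evaluated on the admissible
   valuations, those satisfying X_g n <= g <= Y_g m for every active g, where g is
   active when X_g, Y_g only mention earlier generators and X_g n <= Y_g m holds for
   every valuation admissible below g. A countable gap X <= Y is coded by some
   generator above all the generators involved (omega_1 has uncountable cofinality);
   that generator is active and fills the gap. The algebras B_g of terms in the
   generators below g form a tight filtration: B_(g+1) is the push-out of B_g and the
   countable algebra generated by g and the variables of X_g, Y_g, and the two commute
   by Shannon expansion in g together with compactness of the closed set of
   admissible valuations. Terms code into 2^omega, and there are continuum many
   unconstrained generators, so the algebra has size continuum. *)

(** * Well-orders *)

Definition strict_well_order {T : Type} (lt : T -> T -> Prop) :=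
  (forall i, ~ lt i i) /\ (forall i j k, lt i j -> lt j k -> lt i k) /\
  (forall i j, lt i j \/ i = j \/ lt j i) /\ well_founded lt.

Section WellOrder.
Variables (T : eqType) (R : rel T).
Hypothesis R_wo : well_order R.

Lemma wo_min (P : T -> Prop) : (exists x, P x) -> exists z, P z /\ forall x, P x -> R z x.
Proof.
move=> [x Px]; have [|z [[zP zlb] _]] := @R_wo [pred y | `[< P y >]].
  by exists x; apply/asboolP.
exists z; split=> [|y Py]; first exact/asboolP.
by apply: zlb; apply/asboolP.
Qed.

Let R_chain : wo_chain R predT := withinW R_wo.

Lemma wo_total x y : R x y || R y x.
Proof. by have := wo_chainW R_chain; apply. Qed.

Lemma wo_anti x y : R x y -> R y x -> x = y.
Proof. by move=> xy yx; have := wo_chain_antisymmetric R_chain; apply; rewrite ?xy. Qed.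

Lemma wo_trans x y z : R x y -> R y z -> R x z.
Proof.
move=> xy yz; have [|m [mxyz mlb]] := @wo_min (fun w => [\/ w = x, w = y | w = z]).
  by exists x; constructor 1.
case: mxyz => E; subst m; first by apply: mlb; constructor 3.
- by rewrite (wo_anti xy (mlb x _)) //; constructor 1.
- by rewrite -(wo_anti yz (mlb y _)) //; constructor 2.
Qed.

Lemma wo_strict_well_order : strict_well_order (fun x y => R x y /\ x <> y).
Proof.
split; first by move=> x [].
split; first by move=> x y z [xy nxy] [yz nyz]; split=> [|xz]; [apply: wo_trans xy yz|
  by subst z; apply: nxy; apply: wo_anti].
split.
  move=> x y; case: (pselect (x = y)) => [->|nxy]; first by right; left.
  by case/orP: (wo_total x y) => h; [left|right; right]; split=> // E; apply: nxy; rewrite E.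
move=> x; apply: contrapT => Nx.
have [z [Nz zlb]] := @wo_min (fun y => ~ Acc _ y) (ex_intro _ x Nx).
apply: Nz; constructor => y [yz nyz]; apply: contrapT => Ny.
by apply: nyz; apply: wo_anti yz (zlb _ Ny).
Qed.

End WellOrder.

Lemma strict_well_order_sub (T : Type) (P : T -> Prop) (lt : T -> T -> Prop) :
  strict_well_order lt -> strict_well_order (fun a b : {x | P x} => lt (sval a) (sval b)).
Proof.
case=> irr [tr [tot wf]]; split; [|split; [|split]] => [a|a b c|[a Pa] [b Pb] /=|].
- exact: irr.
- exact: tr.
- case: (tot a b) => [|[E|]]; [by left| |by right; right].
  by subst b; right; left; congr exist; apply: Prop_irrelevance.
- exact: wf_inverse_image.
Qed.

Definition lexprod (A B : Type) (ltA : A -> A -> Prop) (ltB : B -> B -> Prop) (x y : A * B) :=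
  ltA x.1 y.1 \/ x.1 = y.1 /\ ltB x.2 y.2.

Lemma strict_well_order_lexprod (A B : Type) (ltA : A -> A -> Prop) (ltB : B -> B -> Prop) :
  strict_well_order ltA -> strict_well_order ltB -> strict_well_order (lexprod ltA ltB).
Proof.
case=> irrA [trA [totA wfA]] [irrB [trB [totB wfB]]]; split; [|split; [|split]].
- by move=> x [/irrA|[_ /irrB]].
- move=> x y z [xy|[xy xy']] [yz|[yz yz']]; rewrite /lexprod.
  + by left; apply: trA xy yz.
  + by left; rewrite -yz.
  + by left; rewrite xy.
  + by right; split; [rewrite xy|apply: trB xy' yz'].
- move=> [a b] [c d]; rewrite /lexprod /=.
  case: (totA a c) => [|[<-|]]; [by left; left| |by right; right; left].
  case: (totB b d) => [|[<-|]]; [by left; right| |by right; right; right].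
  by right; left.
- suff acc a b : Acc (lexprod ltA ltB) (a, b) by case.
  elim/(well_founded_ind wfA): a b => a IHa b; elim/(well_founded_ind wfB): b => b IHb.
  by constructor=> -[c d] [/= ca|[/= -> db]]; [apply: IHa|apply: IHb].
Qed.

(** * Boolean terms *)

Inductive term (V : Type) :=
| tvar of V
| tbot
| ttop
| tmeet of term V & term V
| tjoin of term V & term V
| tcompl of term V.
Arguments tvar {V}. Arguments tbot {V}. Arguments ttop {V}.
Arguments tmeet {V}. Arguments tjoin {V}. Arguments tcompl {V}.

Section Terms.
Variable V : Type.
Implicit Types (p q : V -> bool) (s t : term V).

Fixpoint eval p t : bool :=
  match t with
  | tvar v => p v
  | tbot => false
  | ttop => true
  | tmeet s t => eval p s && eval p t
  | tjoin s t => eval p s || eval p t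
  | tcompl t => ~~ eval p t
  end.

Fixpoint occurs (v : V) t : Prop :=
  match t with
  | tvar u => u = v
  | tbot | ttop => False
  | tmeet s t | tjoin s t => occurs v s \/ occurs v t
  | tcompl t => occurs v t
  end.

Lemma eq_eval p q t : (forall v, occurs v t -> p v = q v) -> eval p t = eval q t.
Proof.
elim: t => [u| | |s IHs t IHt|s IHs t IHt|t IHt] //= pq; first exact: pq.
- by rewrite IHs ?IHt // => v vt; apply: pq; [right|left].
- by rewrite IHs ?IHt // => v vt; apply: pq; [right|left].
- by rewrite IHt.
Qed.

Fixpoint tbind (sigma : V -> term V) t : term V :=
  match t with
  | tvar v => sigma v
  | tbot => tbot
  | ttop => ttop
  | tmeet t1 t2 => tmeet (tbind sigma t1) (tbind sigma t2)
  | tjoin t1 t2 => tjoin (tbind sigma t1) (tbind sigma t2)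
  | tcompl t => tcompl (tbind sigma t)
  end.

Lemma eval_tbind p sigma t : eval p (tbind sigma t) = eval (fun v => eval p (sigma v)) t.
Proof. by elim: t => //= [t1 -> t2 ->|t1 -> t2 ->|t ->]. Qed.

Lemma occurs_tbind v sigma t :
  occurs v (tbind sigma t) -> exists2 u, occurs u t & occurs v (sigma u).
Proof.
elim: t => [u| | |t1 IH1 t2 IH2|t1 IH1 t2 IH2|t IH] //=; first by exists u.
- by case=> [/IH1|/IH2] [u ut vu]; exists u => //; [left|right].
- by case=> [/IH1|/IH2] [u ut vu]; exists u => //; [left|right].
Qed.

Definition tcofactor (a : V) (b : bool) : term V -> term V :=
  tbind (fun v => if `[< v = a >] then (if b then ttop else tbot) else tvar v).

Lemma eval_tcofactor p a t : eval p (tcofactor a (p a) t) = eval p t.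
Proof.
rewrite eval_tbind; apply: eq_eval => v _.
by case: asboolP => [->|]; [case: (p a)|].
Qed.

Lemma occurs_tcofactor v a b t : occurs v (tcofactor a b t) -> occurs v t /\ v <> a.
Proof.
case/occurs_tbind=> u ut; case: asboolP => [_|ua]; first by case: b.
by move=> /= uv; subst u.
Qed.

Fixpoint tbigmeet (Z : nat -> term V) (N : nat) : term V :=
  if N is N'.+1 then tmeet (tbigmeet Z N') (Z N) else Z 0%N.

Lemma tbigmeetP p Z N :
  reflect (forall n, (n <= N)%N -> eval p (Z n)) (eval p (tbigmeet Z N)).
Proof.
apply: (iffP idP); elim: N => [|N IH] /=.
- by move=> Z0 n; rewrite leqn0 => /eqP ->.
- by case/andP=> /IH ZN ZN1 n; rewrite leq_eqVlt => /orP[/eqP ->|]; last exact: ZN.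
- by apply.
- by move=> Zn; rewrite Zn // IH // => n nN; apply: Zn; apply: leqW.
Qed.

Lemma tbigmeet_le p Z N M : (N <= M)%N -> eval p (tbigmeet Z M) -> eval p (tbigmeet Z N).
Proof.
by move=> NM /tbigmeetP ZM; apply/tbigmeetP => n nN; apply: ZM (leq_trans nN NM).
Qed.

Lemma occurs_tbigmeet v Z N : occurs v (tbigmeet Z N) -> exists n, occurs v (Z n).
Proof. by elim: N => [|N IH] /=; [exists 0%N|case=> [/IH|]; last exists N.+1]. Qed.

Fixpoint tvar_enum (d : V) t (k : nat) : V :=
  match t with
  | tvar v => v
  | tbot | ttop => d
  | tmeet t1 t2 | tjoin t1 t2 => tvar_enum d (if odd k then t2 else t1) k./2
  | tcompl t => tvar_enum d t k
  end.

Lemma tvar_enum_onto d v t : occurs v t -> exists k, tvar_enum d t k = v.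
Proof.
have [evenK oddK] : (forall k, odd k.*2 = false /\ k.*2./2 = k) /\
                    (forall k, odd k.*2.+1 /\ k.*2.+1./2 = k).
  by split=> k; rewrite /= ?odd_double ?doubleK ?uphalf_double.
elim: t => [u| | |t1 IH1 t2 IH2|t1 IH1 t2 IH2|t IH] //=; first by exists 0%N.
- case=> [/IH1|/IH2] [k <-]; [exists k.*2; case: (evenK k)|exists k.*2.+1; case: (oddK k)];
  by move=> -> ->.
- case=> [/IH1|/IH2] [k <-]; [exists k.*2; case: (evenK k)|exists k.*2.+1; case: (oddK k)];
  by move=> -> ->.
Qed.

End Terms.

Fixpoint tmap (V U : Type) (f : V -> U) (t : term V) : term U :=
  match t with
  | tvar v => tvar (f v)
  | tbot => tbot
  | ttop => ttop
  | tmeet s t => tmeet (tmap f s) (tmap f t)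
  | tjoin s t => tjoin (tmap f s) (tmap f t)
  | tcompl t => tcompl (tmap f t)
  end.

Lemma tmapK_in (V U : Type) (f : V -> U) (g : U -> V) (t : term V) :
  (forall v, occurs v t -> g (f v) = v) -> tmap g (tmap f t) = t.
Proof.
elim: t => [u| | |s IHs t IHt|s IHs t IHt|t IHt] //= gf; first by rewrite gf.
- by rewrite IHs ?IHt // => v vt; apply: gf; [right|left].
- by rewrite IHs ?IHt // => v vt; apply: gf; [right|left].
- by rewrite IHt.
Qed.

Fixpoint tree_of_term (V : Type) (t : term V) : GenTree.tree V :=
  match t with
  | tvar v => GenTree.Leaf v
  | tbot => GenTree.Node 0 [::]
  | ttop => GenTree.Node 1 [::]
  | tmeet s t => GenTree.Node 2 [:: tree_of_term s; tree_of_term t]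
  | tjoin s t => GenTree.Node 3 [:: tree_of_term s; tree_of_term t]
  | tcompl t => GenTree.Node 4 [:: tree_of_term t]
  end.

Lemma tree_of_term_inj (V : Type) : injective (@tree_of_term V).
Proof.
elim=> [u| | |s IHs t IHt|s IHs t IHt|t IHt] [u'| | |s' t'|s' t'|t'] //=.
- by case=> ->.
- by case=> /IHs -> /IHt ->.
- by case=> /IHs -> /IHt ->.
- by case=> /IHt ->.
Qed.

(** * Compactness *)

(* These are exactly the closed subsets of the Cantor space [V -> bool]. *)
Definition implication_closed (V : Type) (Om : (V -> bool) -> Prop) :=
  forall p, (forall s t, (forall q, Om q -> eval q s -> eval q t) -> eval p s -> eval p t) ->
  Om p.

Lemma compactness (V : Type) (Om : (V -> bool) -> Prop) (c : nat -> term V) :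
  implication_closed Om ->
  (forall N, exists2 p, Om p & forall n, (n <= N)%N -> eval p (c n)) ->
  exists2 p, Om p & forall n, eval p (c n).
Proof.
move=> Om_closed fin.
pose B N := [set p | Om p /\ forall n, (n <= N)%N -> eval p (c n)].
have BF : ProperFilter (filter_from [set: nat] B).
  apply: filter_from_proper => [|N _]; last by have [p] := fin N; exists p.
  apply: filter_fromT_filter => [|i j]; first by exists 0%N.
  exists (maxn i j) => p [Op cp]; split; split=> // n ni; apply: cp;
  by rewrite (leq_trans ni) // ?leq_maxl ?leq_maxr.
have [G [GU BG]] := ultraFilterLemma BF.
have GB N : G (B N) by apply: BG; exists N.
have GC A : G (~` A) <-> ~ G A.
  split=> [GA' GA|]; last by case: (in_ultra_setVsetC A GU).
  by have [p []] := filter_ex (filterI GA GA').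
pose pU v := `[< G [set p | p v] >].
have evalU t : eval pU t = `[< G [set p | eval p t] >].
  elim: t => [v| | |s IHs t IHt|s IHs t IHt|t IHt] //=.
  - by apply/esym/asboolPn => /filter_ex [].
  - by apply/esym/asboolP; apply: filterS filterT.
  - rewrite IHs IHt; apply/andP/asboolP => [[/asboolP Gs /asboolP Gt]|Gst].
      by apply: filterS (filterI Gs Gt) => p [Ps Pt]; apply/andP.
    by split; apply/asboolP; apply: filterS Gst => p /andP[].
  - rewrite IHs IHt; apply/orP/asboolP => [[] /asboolP Gu|Gst].
    + by apply: filterS Gu => p Ps; apply/orP; left.
    + by apply: filterS Gu => p Pt; apply/orP; right.
    case: (pselect (G [set p | eval p s])) => Gs; [left|right]; apply/asboolP => //.
    by apply: filterS (filterI Gst (proj2 (GC _) Gs)) => p [/orP[]].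
  - have -> : [set p | ~~ eval p t] = ~` [set p | eval p t].
      by apply/seteqP; split=> p /negP.
    by rewrite IHt; apply/idP/asboolP => [/asboolPn/GC|/GC/asboolPn].
exists pU => [|n].
  apply: Om_closed => s t st; rewrite !evalU => /asboolP Gs; apply/asboolP.
  by apply: filterS (filterI Gs (GB 0%N)) => p [ps [Op _]]; apply: st.
by rewrite evalU; apply/asboolP; apply: filterS (GB n) => p [_]; apply.
Qed.
Arguments compactness {V Om} c.

(** * The algebra of terms modulo a set of valuations *)

Section TermAlgebra.
Variables (V : Type) (Om : (V -> bool) -> Prop).
Implicit Types (s t : term V).

Definition models t : set (V -> bool) := [set p | Om p /\ eval p t].

(* The subalgebra of the power set of [Om] generated by the sets [[set p | p v]]:
   an element is the set of valuations in [Om] satisfying some term. *)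
Record termalg := TermAlg { tset : set (V -> bool); tsetP : exists t, tset = models t }.

Definition cls t : termalg := TermAlg (ex_intro _ t erefl).
Definition rep (x : termalg) : term V := projT1 (cid (tsetP x)).

Lemma termalg_ext (x y : termalg) : tset x = tset y -> x = y.
Proof. by case: x y => A hA [B hB] /= AB; subst B; congr TermAlg; apply: Prop_irrelevance. Qed.

Lemma repK : cancel rep cls.
Proof. by move=> x; apply: termalg_ext; rewrite /rep; case: cid. Qed.

Lemma termalg_ind (P : termalg -> Prop) : (forall t, P (cls t)) -> forall x, P x.
Proof. by move=> Pcls x; rewrite -(repK x). Qed.

Lemma clsP s t : cls s = cls t <-> forall p, Om p -> eval p s = eval p t.
Proof.
split=> [/(congr1 tset) /= st p Op|st]; last first.
  apply: termalg_ext; apply/funext => p; apply/propext.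
  by split=> -[Op h]; split; rewrite // ?st // -st.
apply/idP/idP => h; first by have [] : models t p by rewrite -st.
by have [] : models s p by rewrite st.
Qed.

Lemma eval_rep_cls t p : Om p -> eval p (rep (cls t)) = eval p t.
Proof. by move=> Op; apply: (proj1 (clsP _ _)) Op; rewrite repK. Qed.

Definition ta_meet x y := cls (tmeet (rep x) (rep y)).
Definition ta_join x y := cls (tjoin (rep x) (rep y)).
Definition ta_compl x := cls (tcompl (rep x)).

Lemma ta_meet_cls s t : ta_meet (cls s) (cls t) = cls (tmeet s t).
Proof. by apply/clsP => p Op /=; rewrite !eval_rep_cls. Qed.

Lemma ta_join_cls s t : ta_join (cls s) (cls t) = cls (tjoin s t).
Proof. by apply/clsP => p Op /=; rewrite !eval_rep_cls. Qed.

Lemma ta_compl_cls t : ta_compl (cls t) = cls (tcompl t).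
Proof. by apply/clsP => p Op /=; rewrite !eval_rep_cls. Qed.

Ltac ta_pointwise := repeat (let t := fresh "t" in elim/termalg_ind => t);
  rewrite ?(ta_meet_cls, ta_join_cls, ta_compl_cls); apply/clsP => p _ /=.

Lemma ta_meetC : commutative ta_meet. Proof. by ta_pointwise; rewrite andbC. Qed.
Lemma ta_joinC : commutative ta_join. Proof. by ta_pointwise; rewrite orbC. Qed.
Lemma ta_meetA : associative ta_meet. Proof. by ta_pointwise; rewrite andbA. Qed.
Lemma ta_joinA : associative ta_join. Proof. by ta_pointwise; rewrite orbA. Qed.
Lemma ta_joinKI y x : ta_meet x (ta_join x y) = x.
Proof. by move: y x; ta_pointwise; case: (eval p _). Qed.
Lemma ta_meetKU y x : ta_join x (ta_meet x y) = x.
Proof. by move: y x; ta_pointwise; case: (eval p _). Qed.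
Lemma ta_meetUl : left_distributive ta_meet ta_join.
Proof. by ta_pointwise; rewrite andb_orl. Qed.
Lemma ta_meetxx : idempotent_op ta_meet. Proof. by ta_pointwise; rewrite andbb. Qed.
Lemma ta_joinxC x : ta_join x (ta_compl x) = cls ttop.
Proof. by move: x; ta_pointwise; rewrite orbN. Qed.
Lemma ta_meetxC x : ta_meet x (ta_compl x) = cls tbot.
Proof. by move: x; ta_pointwise; rewrite andbN. Qed.

End TermAlgebra.
Arguments rep {V Om} x.

Fact termalg_display : Order.disp_t. Proof. exact: Order.Disp tt tt. Qed.

HB.instance Definition _ V Om := gen_eqMixin (@termalg V Om).
HB.instance Definition _ V Om := gen_choiceMixin (@termalg V Om).

Definition ta_le V Om (x y : @termalg V Om) := ta_meet x y == x.
Definition ta_lt V Om (x y : @termalg V Om) := (y != x) && ta_le x y.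

HB.instance Definition _ V Om := @Order.isMeetJoinDistrLattice.Build termalg_display
  (@termalg V Om) (@ta_le V Om) (@ta_lt V Om) (@ta_meet V Om) (@ta_join V Om)
  (fun _ _ => erefl) (fun _ _ => erefl) (@ta_meetC V Om) (@ta_joinC V Om)
  (@ta_meetA V Om) (@ta_joinA V Om) (@ta_joinKI V Om) (@ta_meetKU V Om)
  (@ta_meetUl V Om) (@ta_meetxx V Om).

Section TermAlgebraOrder.
Variables (V : Type) (Om : (V -> bool) -> Prop).
Local Notation cls := (@cls V Om).
Local Open Scope order_scope.

Lemma le_clsP s t : reflect (forall p, Om p -> eval p s -> eval p t) (cls s <= cls t).
Proof.
apply: (iffP eqP); rewrite ta_meet_cls.
- by move/clsP => st p Op ps; have := st p Op; rewrite /= ps.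
- by move=> st; apply/clsP => p Op /=; case ps: (eval p s); rewrite // st.
Qed.

Lemma ta_le0x x : cls tbot <= x.
Proof. by elim/termalg_ind: x => t; apply/le_clsP. Qed.
Lemma ta_lex1 x : x <= cls ttop.
Proof. by elim/termalg_ind: x => t; apply/le_clsP. Qed.

End TermAlgebraOrder.

HB.instance Definition _ V Om := @Order.hasBottom.Build termalg_display (@termalg V Om)
  (cls Om tbot) (@ta_le0x V Om).
HB.instance Definition _ V Om := @Order.hasTop.Build termalg_display (@termalg V Om)
  (cls Om ttop) (@ta_lex1 V Om).
HB.instance Definition _ V Om := @Order.TBDistrLattice_hasComplement.Build termalg_display
  (@termalg V Om) (@ta_compl V Om) (@ta_joinxC V Om) (@ta_meetxC V Om).
HB.instance Definition _ V Om := isPointed.Build (@termalg V Om) (cls Om tbot).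

Section TermAlgebraOps.
Variables (V : Type) (Om : (V -> bool) -> Prop).
Local Notation cls := (@cls V Om).
Local Open Scope order_scope.

Lemma meet_cls s t : cls s `&` cls t = cls (tmeet s t). Proof. exact: ta_meet_cls. Qed.
Lemma join_cls s t : cls s `|` cls t = cls (tjoin s t). Proof. exact: ta_join_cls. Qed.
Lemma compl_cls t : ~` cls t = cls (tcompl t). Proof. exact: ta_compl_cls. Qed.
Lemma bot_cls : \bot = cls tbot. Proof. by []. Qed.

Definition span (P : V -> Prop) (x : termalg Om) : Prop :=
  exists2 t, (forall v, occurs v t -> P v) & x = cls t.

Lemma span_subalgebra P : subalgebra (span P).
Proof.
split; [by exists tbot|by exists ttop| | |].
- move=> _ _ [s sP ->] [t tP ->]; rewrite meet_cls; exists (tmeet s t) => // v.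
  by case=> [/sP|/tP].
- move=> _ _ [s sP ->] [t tP ->]; rewrite join_cls; exists (tjoin s t) => // v.
  by case=> [/sP|/tP].
- by move=> _ [t tP ->]; rewrite compl_cls; exists (tcompl t).
Qed.

Lemma span_mono (P Q : V -> Prop) : (forall v, P v -> Q v) -> bsubset (span P) (span Q).
Proof. by move=> PQ _ [t tP ->]; exists t => // v /tP /PQ. Qed.

Lemma span_min P (A : termalg Om -> Prop) :
  subalgebra A -> (forall v, P v -> A (cls (tvar v))) -> bsubset (span P) A.
Proof.
case=> A0 A1 AI AU AN AP _ [t + ->].
elim: t => [v| | |s IHs t IHt|s IHs t IHt|t IHt] /= tP.
- exact: AP (tP v erefl).
- exact: A0.
- exact: A1.
- by rewrite -meet_cls; apply: AI; [apply: IHs|apply: IHt] => v vt; apply: tP; auto.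
- by rewrite -join_cls; apply: AU; [apply: IHs|apply: IHt] => v vt; apply: tP; auto.
- by rewrite -compl_cls; apply: AN; apply: IHt.
Qed.

Lemma span_countable P (nu : nat -> V) :
  (forall v, P v -> exists k, nu k = v) -> countable_set (span P).
Proof.
move=> Pnu; have [iota iotaK] : exists iota : V -> nat, forall v, P v -> nu (iota v) = v.
  suff /choice[iota iotaK] : forall v, exists k, P v -> nu k = v by exists iota.
  by move=> v; case: (pselect (P v)) => [/Pnu[k <-]|]; [exists k|exists 0%N].
have [rp rpP] : exists rp : termalg Om -> term V,
    forall x, span P x -> (forall v, occurs v (rp x) -> P v) /\ x = cls (rp x).
  suff /choice[rp rpP] : forall x, exists t,
      span P x -> (forall v, occurs v t -> P v) /\ x = cls t by exists rp.
  move=> x.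
  by case: (pselect (span P x)) => [[t tP ->]|nPx]; [exists t|exists tbot].
exists (fun x => pickle (tree_of_term (tmap iota (rp x)))) => x y Px Py.
move=> /(pcan_inj pickleK) /tree_of_term_inj /(congr1 (tmap nu)).
have [xP {2}->] := rpP x Px; have [yP {2}->] := rpP y Py.
rewrite !tmapK_in => [->| |] // v; [move/yP|move/xP]; exact: iotaK.
Qed.

End TermAlgebraOps.

Section BooleanAlgebraFacts.
Context {disp : Order.disp_t} {B : ctbDistrLatticeType disp}.

Lemma subalgebraI (A C : B -> Prop) :
  subalgebra A -> subalgebra C -> subalgebra (fun x => A x /\ C x).
Proof.
case=> A0 A1 AI AU AN [C0 C1 CI CU CN]; split=> //.
- by move=> x y [Ax Cx] [Ay Cy]; split; [apply: AI|apply: CI].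
- by move=> x y [Ax Cx] [Ay Cy]; split; [apply: AU|apply: CU].
- by move=> x [Ax Cx]; split; [apply: AN|apply: CN].
Qed.

Lemma countable_set_sub (A C : B -> Prop) :
  bsubset A C -> countable_set C -> countable_set A.
Proof. by move=> AsubC [f finj]; exists f => x y /AsubC Cx /AsubC Cy; apply: finj. Qed.


Lemma countable_enum (Z : B -> Prop) (d : B) :
  countable_set Z -> exists e : nat -> B, (forall x, Z x -> exists n, e n = x) /\
    (forall n, Z (e n) \/ e n = d).
Proof.
move=> [f finj].
have /choice[e eP] : forall n, exists y,
    ((exists2 x, Z x & f x = n) -> Z y /\ f y = n) /\ (~ (exists2 x, Z x & f x = n) -> y = d).
  move=> n; case: (pselect (exists2 x, Z x & f x = n)) => [[x Zx fx]|nex].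
    by exists x; split=> // -[]; exists x.
  by exists d; split=> // /nex.
exists e; split=> [x Zx|n].
  have [/(_ (ex_intro2 _ _ x Zx erefl)) [Ze fe] _] := eP (f x).
  by exists (f x); apply: finj fe.
case: (pselect (exists2 x, Z x & f x = n)) => [/(proj1 (eP n)) []|/(proj2 (eP n))]; auto.
Qed.

End BooleanAlgebraFacts.

(** * Adjoining constrained generators along a well-order *)

Section Constraints.
Variables (I : Type) (lt : I -> I -> Prop).
Hypotheses (lt_irr : forall i, ~ lt i i)
  (lt_trans : forall i j k, lt i j -> lt j k -> lt i k)
  (lt_total : forall i j, lt i j \/ i = j \/ lt j i)
  (lt_wf : well_founded lt).
Variables (X Y : I -> nat -> term I).

Definition below (g : I) (t : term I) := forall v, occurs v t -> lt v g.

Lemma below_trans g h t : lt g h -> below g t -> below h t.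
Proof. by move=> gh gt v /gt vg; apply: lt_trans vg gh. Qed.

Lemma eval_below g p q t : below g t -> (forall v, lt v g -> p v = q v) -> eval p t = eval q t.
Proof. by move=> gt pq; apply: eq_eval => v /gt; apply: pq. Qed.

Lemma below_max g h s t : below g s -> below h t ->
  exists2 k, k = g \/ k = h & below k s /\ below k t.
Proof.
move=> gs ht; case: (lt_total g h) => [gh|[gh|hg]].
- by exists h; [right|split=> //; apply: below_trans gh gs].
- by exists h; [right|subst h].
- by exists g; [left|split=> //; apply: below_trans hg ht].
Qed.

Lemma below_directed (P : I -> Prop) t : (exists g, P g) ->
  (forall v, occurs v t -> exists2 g, P g & lt v g) -> exists2 g, P g & below g t.
Proof.
move=> [g0 Pg0]; elim: t => [u| | |s IHs t IHt|s IHs t IHt|t IHt] /= tP;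
  try by exists g0.
- by have [g Pg ug] := tP u erefl; exists g => // v <-.
1,2: have [g Pg sg] := IHs (fun v vs => tP v (or_introl vs));
  have [h Ph th] := IHt (fun v vt => tP v (or_intror vt));
  have [k kgh [sk tk]] := below_max sg th;
  by exists k; [case: kgh => ->|move=> v [/sk|/tk]].
- exact: IHt.
Qed.

Definition respects (b : I) (p : I -> bool) :=
  (forall n, eval p (X b n) -> p b) /\ (forall n, p b -> eval p (Y b n)).

(* The constraints [X g n <= g <= Y g m] are imposed only when they are consistent
   with those of the earlier active generators. *)
Definition active_step (g : I) (rec : forall b, lt b g -> Prop) : Prop :=
  (forall n, below g (X g n) /\ below g (Y g n)) /\
  forall p, (forall b (bg : lt b g), rec b bg -> respects b p) ->
    forall n m, eval p (X g n) -> eval p (Y g m).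

Definition active : I -> Prop := Fix lt_wf (fun _ => Prop) active_step.

Lemma activeP g : active g <->
  (forall n, below g (X g n) /\ below g (Y g n)) /\
  forall p, (forall b, lt b g -> active b -> respects b p) ->
    forall n m, eval p (X g n) -> eval p (Y g m).
Proof.
rewrite {1}/active Fix_eq => [|h f f' ff']; last first.
  by congr active_step; do 2 apply: functional_extensionality_dep => ?.
by split=> -[gb gX]; split=> // p pb; apply: gX => b bg; apply: pb.
Qed.

Definition admissible (p : I -> bool) := forall b, active b -> respects b p.

Lemma admissible_closed : implication_closed admissible.
Proof.
move=> p imp b ab; split=> n.
- by apply: (imp (X b n) (tvar b)) => q Oq; apply: (Oq b ab).1.
- by apply: (imp (tvar b) (Y b n)) => q Oq; apply: (Oq b ab).2.
Qed.

Definition restrict_lt (d : I) (q : I -> bool) (b : I) := q b && `[< lt b d >].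

Lemma wf_recursion (G : I -> (I -> bool) -> bool) :
  exists q, forall d, q d = G d (restrict_lt d q).
Proof.
pose F d (rec : forall b, lt b d -> bool) :=
  G d (fun b => if pselect (lt b d) is left h then rec b h else false).
exists (Fix lt_wf (fun _ => bool) F) => d.
rewrite Fix_eq => [|h f f' ff']; last first.
  by congr G; apply: funext => b; case: pselect.
congr G; apply: funext => b; rewrite /restrict_lt.
by case: pselect => h; rewrite ?(asboolT h) ?(asboolF h) ?andbT ?andbF.
Qed.

Lemma admissible_extend (D : I -> Prop) p :
  (forall a b, lt a b -> D b -> D a) -> (forall b, D b -> active b -> respects b p) ->
  exists2 q, admissible q & forall b, D b -> q b = p b.
Proof.
move=> Ddown Dp.
(* Outside [D], take the least value allowed by the lower constraints. *)
have [q qE] := wf_recursion (fun d r =>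
  if `[< D d >] then p d else `[< exists n, eval r (X d n) >]).
have qD b : D b -> q b = p b by move=> Db; rewrite qE; case: asboolP.
exists q => // b; elim/(well_founded_ind lt_wf): b => b IH /[dup] ab /activeP [bXY bord].
have qp t : below b t -> eval (restrict_lt b q) t = eval q t.
  by move=> bt; apply: eval_below bt _ => v vb; rewrite /restrict_lt (asboolT vb) andbT.
case: (pselect (D b)) => Db.
  have [pX pY] := Dp b Db ab.
  have qp' t : below b t -> eval q t = eval p t.
    by move=> bt; apply: eval_below bt _ => v vb; apply: qD (Ddown _ _ vb Db).
  split=> n; rewrite qD // qp'; [exact: pX|exact: (bXY n).1|exact: pY|exact: (bXY n).2].
have qb : q b = `[< exists n, eval q (X b n) >].
  have qpX n : eval (restrict_lt b q) (X b n) = eval q (X b n) by apply/qp/(bXY n).1.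
  rewrite qE; case: asboolP => // _; congr asbool; apply/propext.
  by split=> -[n Xn]; exists n; rewrite ?qpX // -qpX.
split=> n; first by rewrite qb => Xn; apply/asboolP; exists n.
rewrite qb => /asboolP [n0 Xn0]; apply: bord Xn0 => b' b'b ab'; exact: IH.
Qed.

Lemma admissible_exists : exists p, admissible p.
Proof.
have [//|//|q Oq _] := @admissible_extend (fun _ => False) (fun _ => false).
by exists q.
Qed.

Definition upd (p : I -> bool) (a : I) (b : bool) (v : I) := if `[< v = a >] then b else p v.

Lemma upd_eq p a b : upd p a b a = b.
Proof. by rewrite /upd asboolT. Qed.

Lemma upd_lt p a b v : lt v a -> upd p a b v = p v.
Proof. by rewrite /upd => va; case: asboolP => // E; subst v; case: (lt_irr va). Qed.

Lemma eval_upd_below p a b t : below a t -> eval (upd p a b) t = eval p t.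
Proof. by move=> at_; apply: eval_below at_ _ => v /upd_lt. Qed.

Lemma admissible_extend_at p a b : admissible p -> (active a -> respects a (upd p a b)) ->
  exists2 q, admissible q & (forall v, lt v a -> q v = p v) /\ q a = b.
Proof.
move=> Op respa.
have [|c [ca|->] //|q Oq qp] := @admissible_extend (fun v => lt v a \/ v = a) (upd p a b).
- by move=> v w vw [wa|<-]; left => //; apply: lt_trans vw wa.
- move=> /[dup] ac /activeP [cXY _]; have [pX pY] := Op c ac.
  by split=> n; rewrite upd_lt // eval_upd_below;
    [exact: pX|exact: below_trans ca (cXY n).1|exact: pY|exact: below_trans ca (cXY n).2].
- exists q => //; split=> [v va|]; last by rewrite qp ?upd_eq; last right.
  by rewrite qp ?upd_lt //; left.
Qed.

Local Notation cl := (@cls I admissible).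

Definition filtration (g : I) : termalg admissible -> Prop := span (lt^~ g).

Lemma filtration_mono g h : lt g h -> bsubset (filtration g) (filtration h).
Proof. by move=> gh; apply: span_mono => v /lt_trans; apply. Qed.

Lemma filtration_exhaustive (i0 : I) : (forall i, exists j, lt i j) ->
  forall x, exists g, filtration g x.
Proof.
move=> nomax; elim/termalg_ind => t.
have [|v _|g _ gt] := @below_directed (fun _ => True) t; first by exists i0.
  by have [g vg] := nomax v; exists g.
by exists g, t.
Qed.

Lemma filtration_bottom i : (forall j, ~ lt j i) ->
  forall x, filtration i x <-> x = \bot%O \/ x = \top%O.
Proof.
move=> imin x; split=> [[t it ->]|[->|->]]; [|by exists tbot|by exists ttop].
have tconst p q : eval p t = eval q t by apply: eq_eval => v /it /imin.
have [p0 Op0] := admissible_exists.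
by case E: (eval p0 t); [right|left]; apply/clsP => q Oq; rewrite (tconst q p0) E.
Qed.

Lemma filtration_limit a : (exists b, lt b a) ->
  (forall b, lt b a -> exists c, lt b c /\ lt c a) ->
  forall x, filtration a x <-> exists b, lt b a /\ filtration b x.
Proof.
move=> ne lim x; split=> [[t ta ->]|[b [ba]]]; last exact: filtration_mono.
have [v /ta /lim [c [vc ca]]|b ba bt] := @below_directed (lt^~ a) t ne; first by exists c.
by exists b; split=> //; exists t.
Qed.

Definition constraint_var (a v : I) := lt v a /\ exists n, occurs v (X a n) \/ occurs v (Y a n).

Definition step_algebra (a : I) : termalg admissible -> Prop :=
  span (fun v => v = a \/ constraint_var a v).

Lemma step_algebra_countable a : countable_set (step_algebra a).
Proof.
pose nu k := let: (n, i) := odflt (0, 0)%N (unpickle k) in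
  if i is i'.+1 then tvar_enum a (if odd i' then Y a n else X a n) i'./2 else a.
apply: (@span_countable _ _ _ nu) => v [->|[_ [n [vX|vY]]]].
- by exists (pickle (0, 0)%N); rewrite /nu pickleK.
- have [j <-] := tvar_enum_onto a vX; exists (pickle (n, j.*2.+1)).
  by rewrite /nu pickleK /= odd_double doubleK.
- have [j <-] := tvar_enum_onto a vY; exists (pickle (n, j.*2.+2)).
  by rewrite /nu pickleK /= odd_double uphalf_double.
Qed.

(* What an admissible valuation taking the value [b] at [a] satisfies below [a]. *)
Definition gen_cond (a : I) (b : bool) (n : nat) : term I :=
  if `[< active a >] then (if b then Y a n else tcompl (X a n)) else ttop.

Lemma gen_cond_admissible p a n : admissible p -> eval p (gen_cond a (p a) n).
Proof.
rewrite /gen_cond => Op; case: asboolP => // aa; have [pX pY] := Op a aa.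
by case pa: (p a); [apply: pY|apply/negP => /pX; rewrite pa].
Qed.

Lemma gen_cond_respects p a b : (forall n, eval p (gen_cond a b n)) ->
  active a -> respects a (upd p a b).
Proof.
move=> + aa; have [aXY _] := (activeP a).1 aa; rewrite /gen_cond asboolT //.
case: b => cond; split=> n; rewrite upd_eq ?eval_upd_below //;
  try solve [exact: (aXY n).1|exact: (aXY n).2].
by move=> Xn; have := cond n; rewrite /= Xn.
Qed.

Lemma gen_cond_var a b n v : occurs v (gen_cond a b n) -> constraint_var a v.
Proof.
rewrite /gen_cond; case: asboolP => // /activeP [aXY _].
by case: b => /= vn; split; [exact: (aXY n).2|exists n; right|exact: (aXY n).1|exists n; left].
Qed.

Lemma cofactor_separation a u r b : below a u -> below a r ->
  (forall q, admissible q -> q a = b -> eval q u -> eval q r -> False) ->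
  exists N, forall p, admissible p -> eval p u -> eval p r ->
    ~~ eval p (tbigmeet (gen_cond a b) N).
Proof.
move=> au ar disj; apply: contrapT => noN.
have [N|p Op pc] := compactness (fun n => tmeet (tmeet u r) (gen_cond a b n)) admissible_closed.
  apply: contrapT => noP; apply: noN; exists N => p Op pu pr.
  by apply/negP => /tbigmeetP big; apply: noP; exists p => // n nN /=; rewrite pu pr big.
have [/andP[pu pr] _] := andP (pc 0%N).
have [q Oq [qp qa]] := admissible_extend_at Op (gen_cond_respects (fun n => (andP (pc n)).2)).
by apply: (disj q Oq qa); rewrite (eval_below _ qp).
Qed.

(* Expand [s] in the generator [a]; by compactness finitely many of the conditions
   [gen_cond a b] already separate [u] from the cofactor [s[a := b]]. *)
Lemma step_commute a : Defs.commute (filtration a) (step_algebra a).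
Proof.
move=> _ _ [u ua ->] [s sa ->]; rewrite meet_cls bot_cls => /clsP us.
have ra b : below a (tcofactor a b s).
  by move=> v /(@occurs_tcofactor _ v a b s) [vs va]; case: (sa v vs) => [/va|[]].
have [N sepN] : exists N, forall b p, admissible p -> eval p u -> eval p (tcofactor a b s) ->
    ~~ eval p (tbigmeet (gen_cond a b) N).
  have disj b q : admissible q -> q a = b -> eval q u -> eval q (tcofactor a b s) -> False.
    by move=> Oq <- qu; rewrite eval_tcofactor => qs; have := us q Oq; rewrite /= qu qs.
  have /choice[Nb Nbsep] b := cofactor_separation ua (ra b) (disj b).
  have NbN b : (Nb b <= maxn (Nb true) (Nb false))%N by case: b; rewrite ?leq_maxl ?leq_maxr.
  exists (maxn (Nb true) (Nb false)) => b p Op pu prb.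
  exact: contra (tbigmeet_le (NbN b)) (Nbsep b p Op pu prb).
pose w b := tjoin (tcompl (tcofactor a b s)) (tcompl (tbigmeet (gen_cond a b) N)).
pose t := tmeet (w true) (w false).
have tR v : occurs v t -> constraint_var a v.
  have wR b : occurs v (w b) -> constraint_var a v.
    rewrite /w /=; case=> [vr|/(@occurs_tbigmeet _ v (gen_cond a b) N) [n]];
      last exact: gen_cond_var.
    have [vs va] := occurs_tcofactor vr.
    by case: (sa v vs) => [/va|].
  by case=> [/(wR true)|/(wR false)].
exists (cl t), (cl (tcompl t)); split.
- by split; exists t => // v /tR; [case|right].
- by split; exists (tcompl t) => // v /tR; [case|right].
- apply/le_clsP => p Op pu; have wp b : eval p (w b).
    by rewrite /w /= -negb_and; apply/negP => /andP[/(sepN b p Op pu) /negP].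
  by apply/andP; split; apply: wp.
- apply/le_clsP => p Op ps; apply/negP => /andP[wt wf].
  have : eval p (w (p a)) by case: (p a).
  rewrite /w /= eval_tcofactor ps /= => /negP; apply; apply/tbigmeetP => n _.
  exact: gen_cond_admissible.
- by rewrite meet_cls; apply/clsP => p _ /=; rewrite andbN.
Qed.

Definition step_base (a : I) (x : termalg admissible) := filtration a x /\ step_algebra a x.

Lemma step_pushout a b : lt a b -> (forall c, ~ (lt a c /\ lt c b)) ->
  pushout (step_base a) (filtration a) (step_algebra a) (filtration b).
Proof.
move=> ab ab_next.
have Sb : bsubset (step_algebra a) (filtration b).
  by apply: span_mono => v [->|[va _]] //; apply: lt_trans va ab.
split=> //; [by split=> [x []|]; last exact: filtration_mono|by split=> [x []|]| |].
- move=> x; split=> [genx|xb A Asub AS].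
    apply: (genx (filtration b)); first exact: span_subalgebra.
    by move=> y [/(filtration_mono ab)|/Sb].
  apply: span_min Asub _ x xb => v vb; apply: AS.
  case: (lt_total v a) => [va|[->|av]]; last by case: (ab_next v).
  + by left; exists (tvar v) => // u <-.
  + by right; exists (tvar a) => // u <-; left.
- exact: step_commute.
Qed.

Lemma termalg_tightly_sigma_filtered (i0 : I) : (forall i, exists j, lt i j) ->
  tightly_sigma_filtered (termalg admissible).
Proof.
move=> nomax; exists I, lt, filtration; split.
- by do 3?split.
- split; [move=> i; exact: span_subalgebra|split; [exact: filtration_mono|]].
  exact: filtration_exhaustive i0 nomax.
- exact: filtration_bottom.
- exact: filtration_limit.
- move=> a; exists (step_base a), (step_algebra a); split.
  + split; first by apply: subalgebraI; apply: span_subalgebra.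
    by apply: countable_set_sub (step_algebra_countable a) => x [].
  + by split; [apply: span_subalgebra|apply: step_algebra_countable].
  + exact: step_pushout.
  + by move=> amax; have [b /amax] := nomax a.
Qed.

Lemma termalg_countable_separation :
  (forall f g : nat -> term I, exists2 c,
     forall n, below c (f n) /\ below c (g n) & X c = f /\ Y c = g) ->
  countable_separation (termalg admissible).
Proof.
move=> book Xs Ys cX cY XY.
have [eX [eXon eXin]] := countable_enum \bot%O cX.
have [eY [eYon eYin]] := countable_enum \top%O cY.
have [c cfg [Xc Yc]] := book (rep \o eX) (rep \o eY).
have ord n m p : admissible p -> eval p (rep (eX n)) -> eval p (rep (eY m)).
  apply/le_clsP; rewrite !repK.
  by case: (eXin n) (eYin m) => [Xn|->] [Ym|->]; rewrite ?le0x ?lex1 ?XY.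
have ca : active c.
  apply/activeP; split=> [n|p pb n m]; first by rewrite Xc Yc.
  have [x y xy /(lt_trans xy) //|//|q Oq qp] := @admissible_extend (lt^~ c) p.
  rewrite Xc Yc /= -(eval_below (cfg n).1 qp) -(eval_below (cfg m).2 qp).
  exact: ord.
exists (cl (tvar c)); split.
- move=> x /eXon [n <-]; rewrite -[eX n]repK; apply/le_clsP => p Op.
  by have [+ _] := Op c ca; rewrite Xc; apply.
- move=> y /eYon [m <-]; rewrite -[eY m]repK; apply/le_clsP => p Op.
  by have [_ +] := Op c ca; rewrite Yc; apply.
Qed.

Definition unconstrained (j : I) := X j = (fun=> tbot) /\ Y j = (fun=> ttop).

Lemma cls_tvar_unconstrained_inj i j : unconstrained i -> unconstrained j ->
  cl (tvar i) = cl (tvar j) -> i = j.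
Proof.
have sep k l : lt k l -> unconstrained l -> cl (tvar k) <> cl (tvar l).
  move=> kl [Xl Yl] /clsP kl_eq; have [p0 Op0] := admissible_exists.
  have [|q Oq [qp ql]] := @admissible_extend_at p0 l (~~ p0 k) Op0.
    by move=> _; split=> n; rewrite ?Xl ?Yl.
  by have := kl_eq q Oq; rewrite /= ql qp //; case: (p0 k).
move=> iu ju ij; case: (lt_total i j) => [lij|[//|lji]].
- by case: (sep i j lij ju ij).
- by case: (sep j i lji iu (esym ij)).
Qed.

End Constraints.

(** * The index set omega_1 x 2^omega and its codes *)

Lemma countable_setU1 (T : Type) (A : set T) (x : T) : countable A -> countable (x |` A).
Proof.
move=> /countable_injP [f finj]; apply/countable_injP.
exists (fun y => if `[< y = x >] then 0%N else (f y).+1) => y z; rewrite !inE.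
case: asboolP => [->|nyx] Ay; case: asboolP => [->|nzx] Az //= [fyz].
apply: finj fyz; rewrite inE; [by case: Ay|by case: Az].
Qed.

Definition W := nat -> bool.
Definition W_le : rel W := sval (well_ordering_principle W).
Definition W_lt (v w : W) := W_le v w /\ v <> w.

Lemma W_wo : well_order W_le.
Proof. exact: svalP (well_ordering_principle W). Qed.

Lemma W_uncountable : ~ countable [set: W].
Proof.
move=> /pcard_surjP [g gsurj].
have [n _ gn] := gsurj (fun m => ~~ g m m) Logic.I.
by have /= := congr1 (fun w => w n) gn; case: (g n n).
Qed.

Lemma least_outside (U : set W) :
  countable U -> exists w, ~ U w /\ forall v, W_lt v w -> U v.
Proof.
move=> cU; have [|w [Uw wlb]] := @wo_min _ _ W_wo (fun w => ~ U w).
  apply: contrapT => noU; apply: W_uncountable; apply: sub_countable cU.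
  by apply: subset_card_le => w _; apply: contrapT => Uw; apply: noU; exists w.
exists w; split=> // v [vw nvw]; apply: contrapT => Uv.
exact: nvw (wo_anti W_wo vw (wlb v Uv)).
Qed.

Definition omega1 := {w : W | countable [set v | W_lt v w]}.
Definition omega1_lt (a b : omega1) := W_lt (sval a) (sval b).

Lemma omega1_bound (c : nat -> omega1) : exists xi, forall k, omega1_lt (c k) xi.
Proof.
pose U := \bigcup_(k in [set: nat]) (sval (c k) |` [set v | W_lt v (sval (c k))]).
have cU : countable U.
  by apply: bigcup_countable => // k _; apply: countable_setU1; case: (c k).
have [w [Uw wlb]] := least_outside cU.
exists (exist _ w (sub_countable (subset_card_le wlb) cU)) => k; rewrite /omega1_lt /=.
have Uck : ~ (w = sval (c k) \/ W_lt w (sval (c k))) by move=> ?; apply: Uw; exists k.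
case/orP: (wo_total W_wo w (sval (c k))) => wck.
  by case: Uck; case: (pselect (w = sval (c k))) => ?; [left|right].
by split=> // ckw; apply: Uck; left.
Qed.

Lemma omega1_inhabited : inhabited omega1.
Proof.
have [w [_ wlb]] := least_outside (countable0 W).
by constructor; exists w; apply: sub_countable (countable0 W); apply: subset_card_le.
Qed.

Definition wpair (v w : W) : W := fun n => if odd n then w n./2 else v n./2.

Lemma wpair_inj v w v' w' : wpair v w = wpair v' w' -> v = v' /\ w = w'.
Proof.
move=> E; split; apply/funext => n.
- by have := congr1 (fun f => f n.*2) E; rewrite /wpair odd_double doubleK.
- by have := congr1 (fun f => f n.*2.+1) E; rewrite /wpair /= odd_double uphalf_double.
Qed.

Definition wtag (k : nat) (w : W) : W := wpair (fun n => n == k) w.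

Lemma wtag_inj k w k' w' : wtag k w = wtag k' w' -> k = k' /\ w = w'.
Proof.
by case/wpair_inj => /(congr1 (@^~ k)); rewrite eqxx => /esym/eqP.
Qed.

Definition wseq (f : nat -> W) : W :=
  fun m => let: (n, i) := odflt (0, 0)%N (unpickle m) in f n i.

Lemma wseq_inj : injective wseq.
Proof.
move=> f g E; apply/funext => n; apply/funext => i.
by have := congr1 (@^~ (pickle (n, i))) E; rewrite /wseq pickleK.
Qed.

Fixpoint term_code (V : Type) (f : V -> W) (t : term V) : W :=
  match t with
  | tvar v => wtag 0 (f v)
  | tbot => wtag 1 (fun=> false)
  | ttop => wtag 2 (fun=> false)
  | tmeet s t => wtag 3 (wpair (term_code f s) (term_code f t))
  | tjoin s t => wtag 4 (wpair (term_code f s) (term_code f t))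
  | tcompl t => wtag 5 (term_code f t)
  end.

Lemma term_code_inj (V : Type) (f : V -> W) : injective f -> injective (term_code f).
Proof.
move=> finj; elim=> [v| | |s IHs t IHt|s IHs t IHt|t IHt]
  [v'| | |s' t'|s' t'|t'] /= /wtag_inj [] // _.
- by move/finj ->.
- by case/wpair_inj => /IHs -> /IHt ->.
- by case/wpair_inj => /IHs -> /IHt ->.
- by move/IHt ->.
Qed.

Definition Idx := (omega1 * W)%type.
Definition Idx_lt : Idx -> Idx -> Prop := lexprod omega1_lt W_lt.

Lemma Idx_lt_strict_well_order : strict_well_order Idx_lt.
Proof.
apply: strict_well_order_lexprod; last exact: wo_strict_well_order W_wo.
exact: strict_well_order_sub (wo_strict_well_order W_wo).
Qed.

Lemma Idx_lt_nomax i : exists j, Idx_lt i j.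
Proof. by have [xi xiP] := omega1_bound (fun=> i.1); exists (xi, i.2); left; apply: xiP 0%N. Qed.

Definition idx_code (i : Idx) : W := wpair (sval i.1) i.2.

Lemma idx_code_inj : injective idx_code.
Proof.
move=> [[a a_cnt] v] [[b b_cnt] w] E; have [/= ab vw] := wpair_inj E; subst b w.
by congr (exist _ _ _, _); apply: Prop_irrelevance.
Qed.

Definition constraint_data := ((nat -> term Idx) * (nat -> term Idx))%type.

Definition data_code (P : constraint_data) : W :=
  wtag 0 (wpair (wseq (term_code idx_code \o P.1)) (wseq (term_code idx_code \o P.2))).

Lemma data_code_inj : injective data_code.
Proof.
move=> [f g] [f' g'] /wtag_inj [_ /wpair_inj [/wseq_inj ff' /wseq_inj gg']].
by congr pair; apply/funext => n; apply: (term_code_inj idx_code_inj);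
  [apply: (congr1 (@^~ n) ff')|apply: (congr1 (@^~ n) gg')].
Qed.

(* Codes outside the range of [data_code], such as [wtag 1 w], give unconstrained generators. *)
Definition decode (w : W) : constraint_data :=
  if pselect (exists P, data_code P = w) is left h then projT1 (cid h)
  else (fun=> tbot, fun=> ttop).

Lemma data_codeK : cancel data_code decode.
Proof.
move=> P; rewrite /decode; case: pselect => [h|[]]; last by exists P.
by case: cid => Q /= /data_code_inj.
Qed.

Lemma decode_free w : decode (wtag 1 w) = (fun=> tbot, fun=> ttop).
Proof. by rewrite /decode; case: pselect => // h; exfalso; case: h => P /wtag_inj []. Qed.

Definition Xc (i : Idx) := (decode i.2).1.
Definition Yc (i : Idx) := (decode i.2).2.

Lemma Idx_bookkeeping (f g : nat -> term Idx) : exists2 c,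
  forall n, below Idx_lt c (f n) /\ below Idx_lt c (g n) & Xc c = f /\ Yc c = g.
Proof.
have [o0] := omega1_inhabited; pose d : Idx := (o0, fun=> false).
pose nu k := let: (n, i) := odflt (0, 0)%N (unpickle k) in
  tvar_enum d (if odd i then g n else f n) i./2.
have [xi xiP] := omega1_bound (fun k => (nu k).1).
exists (xi, data_code (f, g)); last by rewrite /Xc /Yc /= data_codeK.
move=> n; split=> v /(tvar_enum_onto d) [i <-]; left.
- by have := xiP (pickle (n, i.*2)); rewrite /nu pickleK /= odd_double doubleK.
- by have := xiP (pickle (n, i.*2.+1)); rewrite /nu pickleK /= odd_double uphalf_double.
Qed.

Lemma Idx_lt_wf : well_founded Idx_lt.
Proof. by case: Idx_lt_strict_well_order => _ [_ []]. Qed.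

Definition Balg := termalg (admissible Idx_lt_wf Xc Yc).

Lemma card_Balg : exists f : Balg -> W, bijective f.
Proof.
have [irr [tr [tot _]]] := Idx_lt_strict_well_order.
have le1 : [set: Balg] #<= [set: W].
  apply/pcard_injP; exists (fun x : Balg => term_code idx_code (rep x)) => x y _ _.
  by move=> /(term_code_inj idx_code_inj) xy; rewrite -(repK x) -(repK y) xy.
have le2 : [set: W] #<= [set: Balg].
  have [o0] := omega1_inhabited.
  have free w : unconstrained Xc Yc (o0, wtag 1 w) by rewrite /unconstrained /Xc /Yc decode_free.
  apply/pcard_injP; exists (fun w => cls (admissible Idx_lt_wf Xc Yc) (tvar (o0, wtag 1 w))).
  move=> v w _ _ /(cls_tvar_unconstrained_inj irr tr tot (free v) (free w)) [].
  by case/wtag_inj.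
have /card_set_bijP [f [_ finj fsurj]] := Cantor_Bernstein le1 le2.
have /choice[g gK] : forall w, exists x, f x = w.
  by move=> w; have [x _ fx] := fsurj w Logic.I; exists x.
exists f, g => // x; apply: finj; rewrite ?inE ?gK //.
Qed.

Theorem proposition2p2 :
  exists (disp : Order.disp_t) (B : ctbDistrLatticeType disp),
    (exists f : B -> (nat -> bool), bijective f) /\
    tightly_sigma_filtered B /\ countable_separation B.
Proof.
exists termalg_display, Balg; split; first exact: card_Balg.
have [irr [tr [tot _]]] := Idx_lt_strict_well_order.
have [o0] := omega1_inhabited.
split.
  exact: termalg_tightly_sigma_filtered irr tr tot _ _ _ (o0, fun=> false) Idx_lt_nomax.
exact: (@termalg_countable_separation _ _ tr Idx_lt_wf Xc Yc Idx_bookkeeping).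
Qed.
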